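(* Let $\lambda_1,\lambda_2,\lambda_1',\lambda_2',\sigma_1,\sigma_2,\sigma_1',\sigma_2'\in\mathbb{C}^*$ and $\eta_1,\eta_2,\eta_1',\eta_2'\in\mathbb{C}$ with $\lambda_1\neq\lambda_2$ and $\lambda_1'\neq\lambda_2'$. Then the irreducible $\mathcal{G}$-modules $\Omega(\lambda_1,\eta_1,\sigma_1,0)\otimes\Omega(\lambda_2,\eta_2,0,\sigma_2)$ and $\Omega(\lambda_1',\eta_1',\sigma_1',0)\otimes\Omega(\lambda_2',\eta_2',0,\sigma_2')$ are isomorphic if and only if $(\lambda_1,\eta_1,\sigma_1)=(\lambda_1',\eta_1',\sigma_1')$ and $(\lambda_2,\eta_2,\sigma_2)=(\lambda_2',\eta_2',\sigma_2')$.
   Context: The planar Galilean conformal algebra $\mathcal{G}$ is the complex Lie algebra with basis $\{L_m,H_m,I_m,J_m\mid m\in\mathbb{Z}\}$ and brackets $[L_m,L_n]=(n-m)L_{m+n}$, $[L_m,H_n]=nH_{m+n}$, $[L_m,I_n]=(n-m)I_{m+n}$, $[L_m,J_n]=(n-m)J_{m+n}$, $[H_m,I_n]=I_{m+n}$, $[H_m,J_n]=-J_{m+n}$, and $[H_m,H_n]=[I_m,I_n]=[J_m,J_n]=[I_m,J_n]=0$ for all $m,n\in\mathbb{Z}$. For $\lambda,\sigma\in\mathbb{C}^*$, $\eta\in\mathbb{C}$, the module $\Omega(\lambda,\eta,\sigma,0)$ is $\mathbb{C}[X,Y]$ with $L_m f(X,Y)=\lambda^m(Y-mX+m\eta)f(X,Y-m)$,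 $H_m f(X,Y)=\lambda^m X f(X,Y-m)$, $I_m f(X,Y)=\lambda^m\sigma f(X-1,Y-m)$, $J_m f(X,Y)=0$. The module $\Omega(\lambda,\eta,0,\sigma)$ is $\mathbb{C}[S,T]$ with $L_m f(S,T)=\lambda^m(T+mS+m\eta)f(S,T-m)$, $H_m f(S,T)=\lambda^m S f(S,T-m)$, $I_m f(S,T)=0$, $J_m f(S,T)=\lambda^m\sigma f(S+1,T-m)$. The tensor product of $\mathcal{G}$-modules has action $x(v\otimes w)=xv\otimes w+v\otimes xw$. (When $\lambda_1\neq\lambda_2$ these tensor products are irreducible.) *)

From HB Require Import structures.
From mathcomp Require Import all_boot all_order all_algebra.
From mathcomp Require Import mpoly.
Set Implicit Arguments. Unset Strict Implicit. Unset Printing Implicit Defensive.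
Import Order.TTheory GRing.Theory Num.Theory.
Local Open Scope ring_scope.

(* A linear map between G-modules is a
   module homomorphism iff it commutes with the action of every basis
   element, so the action is specified on the basis. *)
Inductive gca_basis : Type :=
| gL of int | gH of int | gI of int | gJ of int.

Section TensorModule.
Variable C : numClosedFieldType.

(* C[X,Y] (x) C[S,T] is identified with C[X,Y,S,T] = {mpoly C[4]} via
   f(X,Y) (x) g(S,T) |-> f(X,Y) g(S,T).
   Variables: X = 'X_0, Y = 'X_1, S = 'X_2, T = 'X_3. *)
Definition Pol := {mpoly C[4]}.
Definition vX : Pol := 'X_(inord 0).
Definition vY : Pol := 'X_(inord 1).
Definition vS : Pol := 'X_(inord 2).
Definition vT : Pol := 'X_(inord 3).

Definition shift4 (a b c d : C) (f : Pol) : Pol :=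
  comp_mpoly [tuple vX + a%:MP; vY + b%:MP; vS + c%:MP; vT + d%:MP] f.

(* Action of the basis elements on
   Omega(l1,e1,s1,0) (x) Omega(l2,e2,0,s2), using
   x (v (x) w) = x v (x) w + v (x) x w. *)
Definition tens_act (l1 e1 s1 l2 e2 s2 : C) (g : gca_basis) (f : Pol) : Pol :=
  match g with
  | gL m =>
      (l1 ^ m) *: ((vY - (m%:~R) *: vX + (m%:~R * e1)%:MP) * shift4 0 (- m%:~R) 0 0 f)
    + (l2 ^ m) *: ((vT + (m%:~R) *: vS + (m%:~R * e2)%:MP) * shift4 0 0 0 (- m%:~R) f)
  | gH m =>
      (l1 ^ m) *: (vX * shift4 0 (- m%:~R) 0 0 f)
    + (l2 ^ m) *: (vS * shift4 0 0 0 (- m%:~R) f)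
  | gI m =>
      (l1 ^ m * s1) *: shift4 (-1) (- m%:~R) 0 0 f + 0
  | gJ m =>
      0 + (l2 ^ m * s2) *: shift4 0 0 1 (- m%:~R) f
  end.

Definition gmod_iso (act1 act2 : gca_basis -> Pol -> Pol) : Prop :=
  exists phi : Pol -> Pol,
    [/\ (forall (a : C) (u v : Pol), phi (a *: u + v) = a *: phi u + phi v),
        bijective phi &
        (forall (g : gca_basis) (v : Pol), phi (act1 g v) = act2 g (phi v))].

End TensorModule.

(* Let phi be an isomorphism and p := phi 1.  Applied to 1, the actions of I_m
   and J_m give (l1^m s1) p = (l1'^m s1') p(X - 1, Y - m, S, T) and its
   analogue for J.  A nonzero polynomial is an eigenvector of a translation of
   the variables only for the eigenvalue 1, because f(x + a) - f(x) has lower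
   total degree than f; hence s1 = s1', l1 = l1', s2 = s2', l2 = l2', and p is
   invariant under integer translations of Y and T.  Then H_0, H_1 and
   l1 <> l2 give phi X = X p and phi S = S p, and L_m yields
   (l1^m - l2^m) c = m (l1^m (e1' - e1) + l2^m (e2' - e2)) for a constant c
   and every m; the cases m = 1, 2, 3 force e1 = e1' and e2 = e2'. *)

From HB Require Import structures.
From mathcomp Require Import all_boot all_order all_algebra.
From mathcomp Require Import mpoly.
From mathcomp Require Import ring zify.
Import Order.TTheory GRing.Theory Num.Theory.
Local Open Scope ring_scope.

Lemma power_sums_eq0 (R : idomainType) (x y c a b : R) :
  x != 0 -> y != 0 -> x != y ->
  (forall k : nat, (x ^+ k - y ^+ k) * c = k%:R * (x ^+ k * a + y ^+ k * b)) ->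
  a = 0 /\ b = 0.
Proof.
move=> nz_x nz_y neq_xy eq_k.
pose D k := (x ^+ k - y ^+ k) * c - k%:R * (x ^+ k * a + y ^+ k * b).
have D0 k : D k = 0 by rewrite /D eq_k subrr.
have nz_xy : x - y != 0 by rewrite subr_eq0.
(* Combinations of the cases k = 1, 2, 3 in which c cancels. *)
have eq_ab : y * b = x * a.
  have E : (x - y) * (y * b - x * a) = D 2%N - (x + y) * D 1%N by rewrite /D; ring.
  by move: E; rewrite !D0 mulr0 subr0 => /eqP; rewrite mulf_eq0 (negbTE nz_xy) subr_eq0 => /eqP.
have a0 : a = 0.
  have E : (x - y) ^+ 2 * (x * a) = (x ^+ 2 + x * y + y ^+ 2) * D 1%N - D 3%N
    + (x - y) * (x + 2%:R * y) * (y * b - x * a) by rewrite /D; ring.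
  move: E; rewrite !D0 eq_ab subrr !mulr0 subr0 addr0 => /eqP.
  by rewrite !mulf_eq0 (negbTE nz_xy) (negbTE nz_x) => /eqP.
split=> //; apply/eqP; move: eq_ab; rewrite a0 mulr0 => /eqP.
by rewrite mulf_eq0 (negbTE nz_y).
Qed.

Lemma vandermonde2_solve {F : fieldType} {V : lmodType F} {x y : F} {u w v : V} :
  x != y -> u + w = 0 -> x *: u + y *: w = v -> u = (x - y)^-1 *: v.
Proof.
move=> neq_xy /eqP; rewrite addrC addr_eq0 => /eqP -> <-.
by rewrite scalerN -scalerBl scalerA mulVf ?scale1r // subr_eq0.
Qed.

Lemma comp_mpolyA (R : comRingType) (n k l : nat) (p : {mpoly R[n]})
    (lq : n.-tuple {mpoly R[k]}) (lr : k.-tuple {mpoly R[l]}) :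
  p \mPo [tuple tnth lq i \mPo lr | i < n] = (p \mPo lq) \mPo lr.
Proof.
rewrite (comp_mpolyEX p lq) (comp_mpolyEX p) raddf_sum /=.
apply: eq_bigr => m _; rewrite comp_mpolyZ !comp_mpolyX rmorph_prod.
by congr (_ *: _); apply: eq_bigr => i _; rewrite rmorphXn tnth_mktuple.
Qed.

Section TopDegree.
Context {R : idomainType} {n : nat}.
Implicit Types (f g : {mpoly R[n]}).

Definition eq_top f g := (msize (f - g) < msize g)%N.

Lemma eq_top_neq0 {f g} : eq_top f g -> g != 0.
Proof. by apply: contraTneq => ->; rewrite /eq_top msize0. Qed.

Lemma eq_top_msize {f g} : eq_top f g -> (msize f <= msize g)%N.
Proof.
move=> fg; rewrite -[f](subrK g); apply: leq_trans (msizeD_le _ _) _.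
by rewrite geq_max leqnn ltnW.
Qed.

Lemma msizeM_le_pred f g : (msize (f * g) <= (msize f + msize g).-1)%N.
Proof.
have [->|nz_f] := eqVneq f 0; first by rewrite mul0r msize0.
have [->|nz_g] := eqVneq g 0; first by rewrite mulr0 msize0.
by rewrite msizeM.
Qed.

Lemma eq_topM {f g f' g'} : eq_top f g -> eq_top f' g' -> eq_top (f * f') (g * g').
Proof.
move=> fg fg'; have nz_g := eq_top_neq0 fg; have nz_g' := eq_top_neq0 fg'.
have pos_g : (0 < msize g)%N by rewrite lt0n msize_poly_eq0.
have pos_g' : (0 < msize g')%N by rewrite lt0n msize_poly_eq0.
have le_f' := eq_top_msize fg'.
rewrite /eq_top in fg fg' *; rewrite msizeM //.
have -> : f * f' - g * g' = (f - g) * f' + g * (f' - g') by ring.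
apply: leq_ltn_trans (msizeD_le _ _) _; rewrite gtn_max.
apply/andP; split; apply: leq_ltn_trans (msizeM_le_pred _ _) _; lia.
Qed.

Lemma eq_top1 : eq_top 1 1.
Proof. by rewrite /eq_top subrr msize0 msize1. Qed.

Lemma eq_topX_shift (i : 'I_n) (a : R) : eq_top ('X_i + a%:MP) 'X_i.
Proof. by rewrite /eq_top addrC addKr msizeC msizeX mdeg1; case: (a != 0). Qed.

End TopDegree.

Section Shift.
Context {R : idomainType} {n : nat}.
Implicit Types (f : {mpoly R[n]}) (c d : 'I_n -> R).

Definition mshift c f := f \mPo [tuple 'X_i + (c i)%:MP | i < n].

Lemma eq_mshift c d f : c =1 d -> mshift c f = mshift d f.
Proof.
by move=> eq_cd; congr (_ \mPo _); apply: eq_mktuple => i; rewrite eq_cd.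
Qed.

Lemma mshift0 f : mshift (fun=> 0) f = f.
Proof.
rewrite /mshift -[RHS]comp_mpoly_id; congr (_ \mPo _).
by apply: eq_mktuple => i; rewrite addr0.
Qed.

Lemma mshiftD c d f : mshift c (mshift d f) = mshift (fun i => c i + d i) f.
Proof.
rewrite /mshift -comp_mpolyA; congr (_ \mPo _); apply: eq_mktuple => i.
rewrite tnth_mktuple comp_mpolyD comp_mpolyC comp_mpolyXU -tnth_nth tnth_mktuple.
by rewrite rmorphD addrA.
Qed.

Lemma eq_top_mshiftX c (m : 'X_{1..n}) : eq_top (mshift c 'X_[m]) 'X_[m].
Proof.
rewrite /mshift comp_mpolyX [X in eq_top _ X]mpolyXE_id.
apply: (big_ind2 (fun f g => eq_top f g)) => [|f g f' g'|i _];
  [exact: eq_top1 | exact: eq_topM |].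
rewrite tnth_mktuple; elim: (m i) => [|k IHk]; first by rewrite !expr0 eq_top1.
by rewrite !exprS eq_topM // eq_topX_shift.
Qed.

Lemma msize_mshiftB c {f} : f != 0 -> (msize (mshift c f - f) < msize f)%N.
Proof.
move=> nz_f.
have -> : mshift c f - f = \sum_(m <- msupp f) f@_m *: (mshift c 'X_[m] - 'X_[m]).
  rewrite /mshift comp_mpolyEX {3}[f]mpolyE -sumrB.
  by apply: eq_bigr => m _; rewrite scalerBr.
rewrite big_seq; apply: (big_ind (fun g => msize g < msize f)%N).
- by rewrite msize0 lt0n msize_poly_eq0.
- by move=> g h lt_g lt_h; apply: leq_ltn_trans (msizeD_le _ _) _; rewrite gtn_max lt_g.
move=> m supp_m; apply: leq_ltn_trans (msizeZ_le _ _) _.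
apply: leq_trans (eq_top_mshiftX c m) _.
by rewrite msizeX; apply: msize_mdeg_lt.
Qed.

Lemma eq_scale_mshift {c f a b} : f != 0 -> b != 0 ->
  a *: f = b *: mshift c f -> a = b /\ mshift c f = f.
Proof.
move=> nz_f nz_b eq_ab.
have eq_d : b *: (mshift c f - f) = (a - b) *: f by rewrite scalerBr scalerBl eq_ab.
have eq_ba : a = b.
  apply/eqP; apply: contraT => neq_ab; have := msize_mshiftB c nz_f.
  by rewrite -(msizeZ _ nz_b) eq_d msizeZ ?subr_eq0 // ltnn.
split=> //; apply/eqP; rewrite -subr_eq0 -msize_poly_eq0.
by rewrite -(msizeZ _ nz_b) eq_d eq_ba subrr scale0r msize0.
Qed.

End Shift.

Section Shift4.
Context {C : numClosedFieldType}.
Implicit Types (f : Pol C) (a b c d x y : C).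

Lemma shift4_mshift a b c d f :
  shift4 a b c d f = mshift (fun i : 'I_4 => [:: a; b; c; d]`_i) f.
Proof.
congr (_ \mPo _); apply: eq_from_tnth => i; rewrite tnth_mktuple.
by case: i => [[|[|[|[|//]]]] lt_i4]; rewrite (tnth_nth 0) /=;
  congr ('X_ _ + _); apply: val_inj; rewrite /= inordK.
Qed.

Lemma shift4_comp a b c d a' b' c' d' f :
  shift4 a b c d (shift4 a' b' c' d' f) =
  shift4 (a + a') (b + b') (c + c') (d + d') f.
Proof. by rewrite !shift4_mshift mshiftD; apply: eq_mshift => -[[|[|[|[|i]]]]]. Qed.

Lemma shift4_0 f : shift4 0 0 0 0 f = f.
Proof. by rewrite shift4_mshift -[RHS]mshift0; apply: eq_mshift => -[[|[|[|[|i]]]]]. Qed.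

Lemma shift4_1 a b c d : shift4 a b c d 1 = 1.
Proof. exact: comp_mpoly1. Qed.

Lemma eq_scale_shift4 {a b c d f x y} : f != 0 -> y != 0 ->
  x *: f = y *: shift4 a b c d f -> x = y /\ shift4 a b c d f = f.
Proof. by rewrite shift4_mshift; apply: eq_scale_mshift. Qed.

End Shift4.

Section Intertwiner.
Context {C : numClosedFieldType} {l1 e1 s1 l2 e2 s2 l1' e1' s1' l2' e2' s2' : C}.
Context {phi : Pol C -> Pol C}.
Hypothesis phi_linear : linear phi.
HB.instance Definition _ := GRing.isLinear.Build C (Pol C) (Pol C) _ phi phi_linear.
Hypothesis phi_inj : injective phi.
Hypothesis phi_act : forall g v,
  phi (tens_act l1 e1 s1 l2 e2 s2 g v) = tens_act l1' e1' s1' l2' e2' s2' g (phi v).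
Hypotheses (nz_l1' : l1' != 0) (nz_s1' : s1' != 0) (nz_l2' : l2' != 0) (nz_s2' : s2' != 0).

Local Notation p := (phi 1).

Lemma phi1_neq0 : p != 0.
Proof. by rewrite -(raddf0 phi) (inj_eq phi_inj) oner_eq0. Qed.

Lemma phi1_I (m : int) :
  (l1 ^ m * s1) *: p = (l1' ^ m * s1') *: shift4 (-1) (- m%:~R) 0 0 p.
Proof. by have := phi_act (gI m) 1; rewrite /= shift4_1 !addr0 linearZ. Qed.

Lemma phi1_J (m : int) :
  (l2 ^ m * s2) *: p = (l2' ^ m * s2') *: shift4 0 0 1 (- m%:~R) p.
Proof. by have := phi_act (gJ m) 1; rewrite /= shift4_1 !add0r linearZ. Qed.

Lemma phi1_shiftY (m : int) : shift4 0 (- m%:~R) 0 0 p = p.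
Proof.
have nz_c k : l1' ^ k * s1' != 0 by rewrite mulf_neq0 ?expfz_neq0.
have [_ fix_m] := eq_scale_shift4 phi1_neq0 (nz_c m) (phi1_I m).
have [_] := eq_scale_shift4 phi1_neq0 (nz_c 0) (phi1_I 0); rewrite oppr0 => fix_0.
have fix_1 : shift4 1 0 0 0 p = p by rewrite -{1}fix_0 shift4_comp subrr !addr0 shift4_0.
by rewrite -[RHS]fix_1 -[in RHS]fix_m shift4_comp subrr !add0r.
Qed.

Lemma phi1_shiftT (m : int) : shift4 0 0 0 (- m%:~R) p = p.
Proof.
have nz_c k : l2' ^ k * s2' != 0 by rewrite mulf_neq0 ?expfz_neq0.
have [_ fix_m] := eq_scale_shift4 phi1_neq0 (nz_c m) (phi1_J m).
have [_] := eq_scale_shift4 phi1_neq0 (nz_c 0) (phi1_J 0); rewrite oppr0 => fix_0.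
have fix_1 : shift4 0 0 (-1) 0 p = p by rewrite -{1}fix_0 shift4_comp addNr !addr0 shift4_0.
by rewrite -[RHS]fix_1 -[in RHS]fix_m shift4_comp addNr !add0r.
Qed.

Lemma eq_l1_s1 : l1' = l1 /\ s1' = s1.
Proof.
have := phi1_I 0; rewrite !expr0z !mul1r => /(eq_scale_shift4 phi1_neq0 nz_s1') [eq_s _].
have := phi1_I 1; rewrite !expr1z => /(eq_scale_shift4 phi1_neq0 (mulf_neq0 nz_l1' nz_s1')).
by case=> eq_ls _; split; [apply: (mulIf nz_s1'); rewrite -eq_ls eq_s | rewrite eq_s].
Qed.

Lemma eq_l2_s2 : l2' = l2 /\ s2' = s2.
Proof.
have := phi1_J 0; rewrite !expr0z !mul1r => /(eq_scale_shift4 phi1_neq0 nz_s2') [eq_s _].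
have := phi1_J 1; rewrite !expr1z => /(eq_scale_shift4 phi1_neq0 (mulf_neq0 nz_l2' nz_s2')).
by case=> eq_ls _; split; [apply: (mulIf nz_s2'); rewrite -eq_ls eq_s | rewrite eq_s].
Qed.

Hypothesis neq_l12 : l1 != l2.

Lemma phi_vX_vS : phi (vX C) = vX C * p /\ phi (vS C) = vS C * p.
Proof.
have eq_H m : l1 ^ m *: (phi (vX C) - vX C * p) + l2 ^ m *: (phi (vS C) - vS C * p) = 0.
  have := phi_act (gH m) 1; rewrite /= !shift4_1 !mulr1 linearD !linearZ.
  rewrite phi1_shiftY phi1_shiftT; have [-> _] := eq_l1_s1; have [-> _] := eq_l2_s2.
  by move=> eq_m; rewrite !scalerBr addrACA -opprD eq_m subrr.
have := eq_H 1; have := eq_H 0; rewrite !expr0z !expr1z !scale1r => H0 H1.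
have := vandermonde2_solve neq_l12 H0 H1; rewrite scaler0 => /subr0_eq eq_X.
by move: H0; rewrite eq_X subrr add0r => /subr0_eq.
Qed.

Lemma phi1_L (m : int) :
  l1 ^ m *: (phi (vY C) - vY C * p) + l2 ^ m *: (phi (vT C) - vT C * p) =
  (m%:~R * (l1 ^ m * (e1' - e1) + l2 ^ m * (e2' - e2))) *: p.
Proof.
have phiD u v : phi (u + v) = phi u + phi v by exact: raddfD.
have phiN u : phi (- u) = - phi u by exact: raddfN.
have phiZ a u : phi (a *: u) = a *: phi u by exact: linearZ.
have phiC c : phi c%:MP = c *: p by rewrite -[c%:MP]mulr1 mul_mpolyC phiZ.
have := phi_act (gL m) 1; rewrite /= !shift4_1 !mulr1 phi1_shiftY phi1_shiftT.
have [-> _] := eq_l1_s1; have [-> _] := eq_l2_s2; have [phiX phiS] := phi_vX_vS.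
rewrite !(phiD, phiN, phiZ) phiX phiS (phiC (m%:~R * e1)) (phiC (m%:~R * e2)).
move/eqP; rewrite -subr_eq0 => /eqP eq_L; apply/eqP; rewrite -subr_eq0 -[X in _ == X]eq_L.
apply/eqP; rewrite -!mul_mpolyC !(mpolyCD, mpolyCB, mpolyCM, mpolyCN).
ring.
Qed.

Lemma eq_e1_e2 : e1' = e1 /\ e2' = e2.
Proof.
have := phi1_L 0; rewrite !expr0z mul0r scale0r !scale1r => L0.
have := phi1_L 1; rewrite !expr1z => L1.
have [k eq_Y] : exists k, phi (vY C) - vY C * p = k *: p.
  by eexists; rewrite (vandermonde2_solve neq_l12 L0 L1) scalerA.
have eq_T : phi (vT C) - vT C * p = - (k *: p) by apply/eqP; rewrite -eq_Y -addr_eq0 addrC L0.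
have [nz_l1 nz_l2] : l1 != 0 /\ l2 != 0.
  by have [<- _] := eq_l1_s1; have [<- _] := eq_l2_s2.
suff [/subr0_eq -> /subr0_eq ->] : e1' - e1 = 0 /\ e2' - e2 = 0 by [].
have scale_inj a b : a *: p = b *: p -> a = b.
  by move/eqP; rewrite -subr_eq0 -scalerBl scaler_eq0 (negbTE phi1_neq0) orbF subr_eq0 => /eqP.
apply: (@power_sums_eq0 _ l1 l2 k _ _ nz_l1 nz_l2 neq_l12) => n; apply: scale_inj.
by have := phi1_L n; rewrite eq_Y eq_T scalerN -scalerBl scalerA.
Qed.

End Intertwiner.

Theorem theorem3p5 (C : numClosedFieldType)
  (l1 l2 l1' l2' s1 s2 s1' s2' e1 e2 e1' e2' : C) :
  l1 != 0 -> l2 != 0 -> l1' != 0 -> l2' != 0 ->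
  s1 != 0 -> s2 != 0 -> s1' != 0 -> s2' != 0 ->
  l1 != l2 -> l1' != l2' ->
  (gmod_iso (tens_act l1 e1 s1 l2 e2 s2) (tens_act l1' e1' s1' l2' e2' s2')
   <-> ((l1, e1, s1) = (l1', e1', s1') /\ (l2, e2, s2) = (l2', e2', s2'))).
Proof.
(* The remaining hypotheses are consequences of the isomorphism. *)
move=> _ _ nz_l1' nz_l2' _ _ nz_s1' nz_s2' neq_l12 _; split; last first.
  by case=> -[<- <- <-] [<- <- <-]; exists id; split=> //; exists id.
case=> phi [phi_lin /bij_inj phi_inj phi_act].
have [-> ->] := eq_l1_s1 phi_lin phi_inj phi_act nz_l1' nz_s1'.
have [-> ->] := eq_l2_s2 phi_lin phi_inj phi_act nz_l2' nz_s2'.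
by have [-> ->] := eq_e1_e2 phi_lin phi_inj phi_act nz_l1' nz_s1' nz_l2' nz_s2' neq_l12.
Qed.
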